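(* Let $l,m\in\mathbb N$ and $f:[l]\to[m]$. If $l<m$ and $f$ is injective, then $\mathcal H_Ef:\mathcal H_E[l]\to\mathcal H_E[m]$ is an isometry. If $l=m$ and $f$ is bijective, then $\mathcal H_Ef$ is a unitary operator on $\mathcal H_E[l]$.
   Context: $\mathsf R\neq0$ is a finite additive commutative monoid; $\mathcal H_1$ is a finite-dimensional Hilbert space with orthonormal basis $|z\rangle_1$, $z\in\mathsf R$. $\mathbb N=\{0,1,2,\dots\}$, $[l]=\{0,\dots,l-1\}$. $E[l]=\mathsf R^l$; for $f:[l]\to[m]$, $Ef(x)_s=\sum_{r\in[l],f(r)=s}x_r$ (empty sum $=0$). $\mathcal H_E[l]=\mathcal H_1^{\otimes l}$ ($\mathcal H_E[0]=\mathbb C$) with orthonormal basis $|x\rangle=|x_0\rangle_1\otimes\cdots\otimes|x_{l-1}\rangle_1$, $x\in E[l]$, and $\mathcal H_Ef=\sum_{x\in E[l]}|Ef(x)\rangle\langle x|$, i.e. the linear map with $\mathcal H_Ef|x\rangle=|Ef(x)\rangle$. *)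

From HB Require Import structures.
From mathcomp Require Import all_boot all_order all_algebra.
From mathcomp Require Import reals.
From mathcomp Require Import complex.
Set Implicit Arguments. Unset Strict Implicit. Unset Printing Implicit Defensive.
Import Order.TTheory GRing.Theory Num.Theory.
Local Open Scope ring_scope.
Local Open Scope complex_scope.

Definition E (R : finNmodType) (l : nat) := {ffun 'I_l -> R}.

Definition Emap (R : finNmodType) (l m : nat) (f : 'I_l -> 'I_m) (x : E R l) : E R m :=
  [ffun s : 'I_m => \sum_(r < l | f r == s) x r].

(* H_E[l] = H_1^{(x) l}, realized as C^(E[l]) with orthonormal basis the
   indicator vectors |x>, x in E[l]; C = Rr[i] for the real numbers Rr. *)
Definition HE (Rr : realType) (R : finNmodType) (l : nat) :=
  {ffun E R l -> Rr[i]}.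

Definition ket (Rr : realType) (R : finNmodType) (l : nat) (x : E R l) : HE Rr R l :=
  [ffun y => if y == x then 1 else 0].

Definition inner (Rr : realType) (R : finNmodType) (l : nat) (v w : HE Rr R l) : Rr[i] :=
  \sum_(x : E R l) (v x)^* * w x.

(* H_E f = sum_x |E f(x)><x| : the linear map with |x> |-> |E f(x)> *)
Definition HEmap (Rr : realType) (R : finNmodType) (l m : nat) (f : 'I_l -> 'I_m)
    (v : HE Rr R l) : HE Rr R m :=
  [ffun y : E R m => \sum_(x : E R l | Emap f x == y) v x].

Definition HE_isometry (Rr : realType) (R : finNmodType) (l m : nat)
    (T : HE Rr R l -> HE Rr R m) : Prop :=
  forall v w, inner (T v) (T w) = inner v w.

Definition HE_unitary (Rr : realType) (R : finNmodType) (l : nat)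
    (T : HE Rr R l -> HE Rr R l) : Prop :=
  HE_isometry T /\ bijective T.

(* If f is injective, so is E f: the s = f r coordinate of E f x is x_r alone.
   Hence H_E f sends the orthonormal basis vectors |x> to the pairwise distinct
   basis vectors |E f x>, i.e. it is an isometry, with left inverse the
   pullback w |-> w o E f.  When f is a bijection of [l], E f is an injective
   self-map of the finite set E[l], hence a bijection, and the pullback is a
   two-sided inverse. *)
From HB Require Import structures.
From mathcomp Require Import all_boot all_order all_algebra.
From mathcomp Require Import reals complex.
Set Implicit Arguments. Unset Strict Implicit. Unset Printing Implicit Defensive.
Import Order.TTheory GRing.Theory Num.Theory.
Local Open Scope ring_scope.

Section InjectiveMap.

Variables (Rr : realType) (R : finNmodType) (l m : nat) (f : 'I_l -> 'I_m).
Hypothesis f_inj : injective f.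

Lemma Emap_inj : injective (@Emap R l m f).
Proof.
move=> x y exy; apply/ffunP => r.
have fE i : (f i == f r) = (i == r) by apply/eqP/eqP => [/f_inj | ->].
have := congr1 (fun z : E R m => z (f r)) exy.
by rewrite /Emap !ffunE !(big_pred1 r).
Qed.

Lemma HEmap_Emap (v : HE Rr R l) (x : E R l) : HEmap f v (Emap f x) = v x.
Proof.
rewrite /HEmap ffunE (big_pred1 x) // => y /=.
by apply/eqP/eqP => [/Emap_inj | ->].
Qed.

Lemma HEmap_isometry : HE_isometry (HEmap (Rr:=Rr) (R:=R) f).
Proof.
move=> v w; rewrite /inner [RHS](partition_big (Emap f) predT) //=.
apply: eq_bigr => y _; rewrite [HEmap f w y]ffunE mulr_sumr.
by apply: eq_bigr => x /eqP <-; rewrite HEmap_Emap.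
Qed.

Definition HEcomap (w : HE Rr R m) : HE Rr R l := [ffun x => w (Emap f x)].

Lemma HEmapK : cancel (HEmap f) HEcomap.
Proof. by move=> v; apply/ffunP => x; rewrite ffunE HEmap_Emap. Qed.

End InjectiveMap.

Lemma HEmap_bij (Rr : realType) (R : finNmodType) (l : nat) (f : 'I_l -> 'I_l) :
  injective f -> bijective (HEmap (Rr:=Rr) (R:=R) f).
Proof.
move=> f_inj; have [g EfK gK] := injF_bij (@Emap_inj R _ _ _ f_inj).
exists (HEcomap f); first exact: HEmapK.
by move=> w; apply/ffunP => y; rewrite -[y]gK (HEmap_Emap f_inj) ffunE.
Qed.

Theorem proposition4p10 (Rr : realType) (R : finNmodType)
    (hR : exists z : R, z != 0) :
  (forall (l m : nat) (f : 'I_l -> 'I_m),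
      (l < m)%N -> injective f -> HE_isometry (HEmap (Rr:=Rr) (R:=R) f)) /\
  (forall (l : nat) (f : 'I_l -> 'I_l),
      bijective f -> HE_unitary (HEmap (Rr:=Rr) (R:=R) f)).
Proof.
split=> [l m f _ f_inj | l f /bij_inj f_inj].
  exact: HEmap_isometry.
by split; [exact: HEmap_isometry | exact: HEmap_bij].
Qed.
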